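(* Let $R$ be a Noetherian integral domain. If every ideal of $R[X]$ is power stable, then $R$ is a field.
   Context: An ideal $I$ of the polynomial ring $R[X]$ over an integral domain $R$ is called power stable if $I^t\cap R = (I\cap R)^t$ for all integers $t\geq 1$. *)

From HB Require Import structures.
From mathcomp Require Import all_boot all_order all_algebra.
Set Implicit Arguments. Unset Strict Implicit. Unset Printing Implicit Defensive.
Import GRing.Theory.
Local Open Scope ring_scope.

Definition is_ideal (A : comNzRingType) (I : A -> Prop) : Prop :=
  [/\ I 0,
      (forall x y, I x -> I y -> I (x + y)) &
      (forall a x, I x -> I (a * x))].

Inductive ideal_mul (A : comNzRingType) (I J : A -> Prop) : A -> Prop :=
  | ideal_mul0 : ideal_mul I J 0
  | ideal_mul_gen x y : I x -> J y -> ideal_mul I J (x * y)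
  | ideal_mul_add a b : ideal_mul I J a -> ideal_mul I J b -> ideal_mul I J (a + b).

Fixpoint ideal_pow (A : comNzRingType) (I : A -> Prop) (t : nat) : A -> Prop :=
  match t with
  | 0 => fun _ => True
  | t'.+1 => ideal_mul I (ideal_pow I t')
  end.

(* The contraction I ∩ R of an ideal I of R[X], identifying R with constants. *)
Definition contraction (R : comNzRingType) (I : {poly R} -> Prop) : R -> Prop :=
  fun r => I r%:P.

Definition power_stable (R : comNzRingType) (I : {poly R} -> Prop) : Prop :=
  forall t : nat, (1 <= t)%N ->
    forall r : R, contraction (ideal_pow I t) r <-> ideal_pow (contraction I) t r.

Definition noetherian (A : comNzRingType) : Prop :=
  forall I : A -> Prop, is_ideal I ->
    exists s : seq A, forall x : A,
      I x <-> exists c : seq A, x = \sum_(i < size s) c`_i * s`_i.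

Definition is_field (A : comUnitRingType) : Prop :=
  forall x : A, x != 0 -> x \is a GRing.unit.

From mathcomp Require Import all_boot all_order all_algebra.
Set Implicit Arguments. Unset Strict Implicit. Unset Printing Implicit Defensive.
Import GRing.Theory.
Local Open Scope ring_scope.

(* Let a be a nonzero element of R and consider the ideal
   I = (X^2 - a, aX) of R[X].  We show that I is not power stable unless a
   is a unit, so a ring all of whose polynomial ideals are power stable is a
   field.
   - a^3 = (aX)(aX) - a^2 (X^2 - a) and a^2 = X(aX) - a(X^2 - a) lie in I,
     hence a^3 lies in I^2 ∩ R.
   - I ∩ R is contained in (a^2): evaluate at the matrix C = [[0, a], [1, 0]],
     which satisfies C^2 = a; if r = u (X^2 - a) + v aX then
     rC = a v(C) C^2 = a^2 v(C), and the lower left entry of rC is r.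
   - Hence (I ∩ R)^2 ⊆ (a^4), and power stability for t = 2 gives
     a^3 = a^4 s, i.e. a s = 1 since R is a domain. *)

Lemma ideal_pow_principal (A : comNzRingType) (J : A -> Prop) (b : A) :
  (forall x, J x -> exists s, x = b * s) ->
  forall t z, ideal_pow J t z -> exists s, z = b ^+ t * s.
Proof.
move=> sub_bA; elim=> [|t IHt] z /=; first by exists z; rewrite mul1r.
elim=> [|x y Jx Jty|p q _ [s ->] _ [s' ->]].
- by exists 0; rewrite mulr0.
- have [s ->] := sub_bA x Jx; have [s' ->] := IHt y Jty.
  by exists (s * s'); rewrite exprS mulrACA.
- by exists (s + s'); rewrite mulrDr.
Qed.

Lemma ideal_pow2_mul (A : comNzRingType) (J : A -> Prop) (x y : A) :
  J x -> J y -> ideal_pow J 2 (x * y).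
Proof.
by move=> Jx Jy; apply: ideal_mul_gen => //; rewrite -[y]mulr1; apply: ideal_mul_gen.
Qed.

Section SquareRootIdeal.
Variables (R : comNzRingType) (a : R).

Definition sqrt_mx : 'M[R]_2 :=
  \matrix_(i, j) if i == j :> nat then 0 else if i == 0%N :> nat then a else 1.

Lemma sqrt_mxE : sqrt_mx ^+ 2 = a%:M.
Proof.
apply/matrixP => i j; rewrite expr2 -mulmxE !mxE !big_ord_recl big_ord0 !mxE /=.
case: i => [[|[|i]] Hi] //; case: j => [[|[|j]] Hj] //=;
  by rewrite ?mulr0 ?mul0r ?mulr1 ?mul1r ?add0r ?addr0.
Qed.

Definition sqrt_ideal (p : {poly R}) : Prop :=
  exists u v, p = u * ('X^2 - a%:P) + v * (a%:P * 'X).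

Lemma sqrt_ideal_ideal : is_ideal sqrt_ideal.
Proof.
split.
- by exists 0, 0; rewrite !mul0r addr0.
- move=> _ _ [u [v ->]] [u' [v' ->]]; exists (u + u'), (v + v').
  by rewrite !mulrDl addrACA.
- move=> b _ [u [v ->]]; exists (b * u), (b * v).
  by rewrite mulrDr !mulrA.
Qed.

Lemma sqrt_ideal_contraction r : sqrt_ideal r%:P -> exists s, r = a ^+ 2 * s.
Proof.
move=> [u [v /(congr1 (fun p => (horner_mx sqrt_mx p * sqrt_mx) ord_max ord0))]].
rewrite rmorphD !rmorphM rmorphB rmorphXn /= horner_mx_X !horner_mx_C.
rewrite sqrt_mxE subrr mulr0 add0r -!mulrA -expr2 sqrt_mxE.
rewrite -!mulmxE -scalar_mxM mul_scalar_mx mul_mx_scalar !mxE /= mulr1 => ->.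
by exists (horner_mx sqrt_mx v ord_max ord0).
Qed.

Lemma cube_in_sqrt_ideal_sq : contraction (ideal_pow sqrt_ideal 2) (a ^+ 3).
Proof.
rewrite /contraction.
have I_aX : sqrt_ideal (a%:P * 'X) by exists 0, 1; rewrite mul0r add0r mul1r.
have I_X2a : sqrt_ideal ('X^2 - a%:P) by exists 1, 0; rewrite mul0r addr0 mul1r.
have I_a2 : sqrt_ideal (- (a ^+ 2)%:P).
  exists a%:P, (- 'X); rewrite mulrBr mulNr ['X * _]mulrCA -expr2 addrAC subrr.
  by rewrite add0r expr2 polyCM.
have -> : (a ^+ 3)%:P = (a%:P * 'X) * (a%:P * 'X) + ('X^2 - a%:P) * - (a ^+ 2)%:P.
  rewrite mulrN mulrBl opprB addrCA mulrACA -polyCM -!expr2.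
  by rewrite -polyC_exp [_ * (a ^+ 2)%:P]mulrC subrr addr0 -exprS.
by apply: ideal_mul_add; apply: ideal_pow2_mul.
Qed.

End SquareRootIdeal.

Lemma unit_of_cube_mult (R : idomainType) (a s : R) :
  a != 0 -> a ^+ 3 = a ^+ 4 * s -> a \is a GRing.unit.
Proof.
move=> a_neq0 cube_eq; have : a ^+ 3 * (1 - a * s) = 0.
  by rewrite mulrBr mulr1 mulrA -exprSr -cube_eq subrr.
move/eqP; rewrite mulf_eq0 expf_eq0 /= (negbTE a_neq0) subr_eq0 => /eqP as_eq1.
by apply/unitrPr; exists s; rewrite -as_eq1.
Qed.

Theorem theorem3p14 (R : idomainType) (noethR : noetherian R)
  (H : forall I : {poly R} -> Prop, is_ideal I -> power_stable I) :
  is_field R.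
Proof.
move=> a a_neq0.
have [stable_sq _] := H _ (sqrt_ideal_ideal a) 2%N isT (a ^+ 3).
have a3_contr_sq := stable_sq (cube_in_sqrt_ideal_sq a).
have [s a3_eq] := ideal_pow_principal (@sqrt_ideal_contraction R a) a3_contr_sq.
by apply: (unit_of_cube_mult a_neq0); rewrite a3_eq -exprM.
Qed.
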